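(* For all $n\ge3$, the number of pairwise non-isomorphic graphs among the quotient graphs $Q_R$, $R\in\mathcal C_n^*$, is at least $2^n-2n+1$.
   Context: $S_n$ is the set of permutations of $[n]$ with the weak order (inclusion of inversion sets); a lattice congruence is an equivalence relation compatible with joins and meets. Fences. $]a,b[=\{a+1,\dots,b-1\}$. The fence $f(a,b,L)$, for $1\le a<b\le n$ and $L\subseteq\,]a,b[$, is the set of cover edges joining two permutations that differ by swapping adjacent entries $a,b$, with the values of $L$ left of $a,b$ and those of $]a,b[\setminus L$ to the right. Forcing order: $f(a,b,L)\prec f(c,d,M)$ iff $a\le c<d\le b$, $(a,b)\ne(c,d)$, $M=L\cap\,]c,d[$. Lattice congruences $R$ correspond bijectively to downsets $F_R$ of the forcing order (a cover edge joins equivalent permutations iff it lies in a fence of $F_R$). $R$ is essential if $F_R$ contains no fence $f(a,a+1,\emptyset)$; $\mathcal C_n^*$ is the set of essential congruences. $Q_R$ is the undirected cover graph of $S_n/R$. *)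

(* Permutations of [n] are encoded as 'S_n = {perm 'I_n};
   values and positions are 0-based (value v in 'I_n stands for v+1 in [n]).
   A permutation s is read as the word s 0, s 1, ..., s (n-1). *)
From HB Require Import structures.
From mathcomp Require Import all_boot all_order all_fingroup.
Set Implicit Arguments. Unset Strict Implicit. Unset Printing Implicit Defensive.

Section Weak.
Variable n : nat.

Definition inv_set (s : 'S_n) : {set 'I_n * 'I_n} :=
  [set ab : 'I_n * 'I_n | (ab.1 < ab.2) && ((s^-1)%g ab.2 < (s^-1)%g ab.1)].

Definition wle (p q : 'S_n) : Prop := inv_set p \subset inv_set q.

Definition is_join (p q w : 'S_n) : Prop :=
  [/\ wle p w, wle q w & forall u, wle p u -> wle q u -> wle w u].
Definition is_meet (p q w : 'S_n) : Prop :=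
  [/\ wle w p, wle w q & forall u, wle u p -> wle u q -> wle u w].

Definition lattice_congruence (R : rel 'S_n) : Prop :=
  [/\ reflexive R, symmetric R, transitive R,
      (forall x y z w w', R x y -> is_join x z w -> is_join y z w' -> R w w') &
      (forall x y z w w', R x y -> is_meet x z w -> is_meet y z w' -> R w w')].

(* the cover edge {p,q} lies in the fence f(a,b,L): p, q differ by swapping
   the adjacent entries a,b (at positions i, i+1), the values of ]a,b[ to the
   left of the pair are exactly L (the others being to the right). *)
Definition fence_edge (a b : 'I_n) (L : {set 'I_n}) (p q : 'S_n) : Prop :=
  a < b /\
  exists i j : 'I_n,
    [/\ i.+1 = j :> nat, q i = p j, q j = p i /\
        (forall k, k != i -> k != j -> q k = p k),
        ((p i == a) && (p j == b)) || ((p i == b) && (p j == a)) &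
        L = [set c : 'I_n | (a < c < b) && ((p^-1)%g c < i)]].

(* F_R: the fences whose edges are contracted by R (by the standard theory
   a fence is contracted entirely or not at all) *)
Definition in_FR (R : rel 'S_n) (a b : 'I_n) (L : {set 'I_n}) : Prop :=
  exists p q, fence_edge a b L p q /\ R p q.

Definition essential (R : rel 'S_n) : Prop :=
  forall a b : 'I_n, b = a.+1 :> nat -> ~ in_FR R a b set0.

Definition cls (R : rel 'S_n) (p : 'S_n) : {set 'S_n} := [set q | R p q].
Definition qverts (R : rel 'S_n) : {set {set 'S_n}} :=
  [set cls R p | p in [set: 'S_n]].
Definition qle (X Y : {set 'S_n}) : Prop :=
  exists x y, [/\ x \in X, y \in Y & wle x y].
Definition qcover (R : rel 'S_n) (X Y : {set 'S_n}) : Prop :=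
  [/\ X \in qverts R, Y \in qverts R, X != Y, qle X Y &
      forall Z, Z \in qverts R -> qle X Z -> qle Z Y -> Z = X \/ Z = Y].
Definition qedge (R : rel 'S_n) (X Y : {set 'S_n}) : Prop :=
  qcover R X Y \/ qcover R Y X.

Definition Q_iso (R S : rel 'S_n) : Prop :=
  exists f : {set 'S_n} -> {set 'S_n},
    [/\ {in qverts R &, injective f}, f @: qverts R = qverts S &
        forall X Y, X \in qverts R -> Y \in qverts R ->
          (qedge R X Y <-> qedge S (f X) (f Y))].

End Weak.

(* A permutation is determined by its inversion set, and the relations on [n]
   that are inversion sets are exactly the transitive and cotransitive ones;
   hence the inversions of a join are the transitive closure of the union of
   the inversions, and dually for meets.
   Sort the fences f(a,b,L) with b > a + 1 by decreasing b - a, and let R_k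
   identify s and t when they have the same inversions (a,b) that survive the
   first k fences: (a,b) is erased when every fence f(a,b,_) is among them, or
   when no value of ]a,b[ lies between a and b in s and f(a,b,L) is among them
   for L the values of ]a,b[ left of a.  Since the contracted fences are those
   of gap above some threshold together with some of gap equal to it, the
   surviving inversions of joins and meets are computed locally, so R_k is a
   lattice congruence; it is essential because no fence of gap 1 is contracted.
   Each R_(k+1) is strictly coarser than R_k, so with N the number of these
   fences the quotient graphs of R_0, ..., R_N have strictly decreasing
   numbers of vertices.  Finally N >= 2^n - 2n: every subset of [n] other
   than the empty set, the singletons and the pairs {a, a+1} is {a, b} u L
   for a fence f(a,b,L) with b > a + 1. *)

From HB Require Import structures.
From mathcomp Require Import all_boot all_order all_fingroup.
From mathcomp Require Import zify.
Set Implicit Arguments. Unset Strict Implicit. Unset Printing Implicit Defensive.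

Section Inversions.
Variable n : nat.
Implicit Types (s p q x y z w : 'S_n) (a b c : 'I_n) (I : rel 'I_n).

Definition pos s (v : 'I_n) : 'I_n := (s^-1)%g v.
Definition inversion s a b : bool := (a < b) && (pos s b < pos s a).

Lemma wleP p q : wle p q <-> forall a b, inversion p a b -> inversion q a b.
Proof.
split.
- by move=> /subsetP H a b Hab; have := H (a, b); rewrite !inE; apply.
- by move=> H; apply/subsetP => -[a b]; rewrite !inE; apply: H.
Qed.

Definition tc_rel I :=
  [/\ forall a b, I a b -> a < b,
      forall a b c, I a b -> I b c -> I a c &
      forall a b c, a < b -> b < c -> I a c -> I a b || I b c].

Lemma pos_inj s : injective (pos s).
Proof. by move=> u v /perm_inj. Qed.

Lemma tc_rel_inversion s : tc_rel (inversion s).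
Proof.
split.
- by move=> a b /andP[].
- move=> a b c /andP[h1 h2] /andP[h3 h4]; apply/andP; split; lia.
- move=> a b c ab bc /andP[_ ac]; rewrite /inversion ab bc /=.
  case: (ltngtP (pos s b) (pos s a)) => //= h; first lia.
  by move: ab; rewrite (pos_inj (val_inj h)) ltnn.
Qed.

Definition compl I : rel 'I_n := fun a b => (a < b) && ~~ I a b.

Lemma tc_rel_compl I : tc_rel I -> tc_rel (compl I).
Proof.
case=> h1 h2 h3; split.
- by move=> a b /andP[].
- move=> a b c /andP[ab nab] /andP[bc nbc]; rewrite /compl (ltn_trans ab bc) /=.
  by apply/negP => /(h3 _ _ _ ab bc); rewrite (negbTE nab) (negbTE nbc).
- move=> a b c ab bc /andP[ac nac]; rewrite /compl ab bc /= -negb_and.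
  by apply: contra nac => /andP[Iab Ibc]; apply: h2 Iab Ibc.
Qed.

Section PermOfOrder.
Variable lt : rel 'I_n.
Hypotheses (lt_irr : irreflexive lt) (lt_trans : transitive lt)
  (lt_total : forall a b, a != b -> lt a b || lt b a).

Definition rank (v : 'I_n) : nat := #|[set t | lt t v]|.

Lemma rank_lt v : rank v < n.
Proof.
have sub : [set t | lt t v] \subset [set~ v].
  by apply/subsetP => t; rewrite !inE; apply: contraTneq => ->; rewrite lt_irr.
have := subset_leq_card sub; rewrite cardsC1 card_ord /rank.
have := ltn_ord v; lia.
Qed.

Lemma rank_mono v t : lt v t -> rank v < rank t.
Proof.
move=> vt; apply: proper_card; apply/properP; split.
- by apply/subsetP => u; rewrite !inE => uv; apply: lt_trans uv vt.
- by exists v; rewrite !inE ?lt_irr.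
Qed.

Definition rank_ord v : 'I_n := Ordinal (rank_lt v).

Lemma rank_ord_inj : injective rank_ord.
Proof.
move=> v t /(congr1 val) /= e; apply/eqP; apply/negPn/negP => ne.
by case/orP: (lt_total ne) => /rank_mono; rewrite e ltnn.
Qed.

Lemma perm_of_order : exists s, forall v t, (pos s v < pos s t) = lt v t.
Proof.
exists ((perm rank_ord_inj)^-1)%g => v t; rewrite /pos invgK !permE /=.
case vt: (lt v t); first exact: rank_mono.
case: (eqVneq v t) => [->|ne]; first by rewrite ltnn.
have := lt_total ne; rewrite vt /= => /rank_mono h; apply/negbTE; rewrite -leqNgt; lia.
Qed.
End PermOfOrder.

Lemma perm_of_key (key : 'I_n -> nat) :
  exists s, forall u v : 'I_n, u < v -> inversion s u v = (key v < key u).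
Proof.
pose lt (v t : 'I_n) := (key v < key t) || ((key v == key t) && (v < t)).
have irr : irreflexive lt by move=> v; rewrite /lt ltnn eqxx ltnn.
have tr : transitive lt.
  move=> v u t; rewrite /lt.
  by case: (ltngtP (key u) (key v)); case: (ltngtP (key v) (key t)) => //=; lia.
have tot a b : a != b -> lt a b || lt b a.
  move=> ne; rewrite /lt; case: (ltngtP (key a) (key b)) => //= _.
  by case: (ltngtP a b) => //= e; rewrite (val_inj e) eqxx in ne.
have [s hs] := perm_of_order irr tr tot.
exists s => u v uv; rewrite /inversion uv hs /lt /=.
by case: (ltngtP (key v) (key u)) => //= _; rewrite ltnNge ltnW.
Qed.

(* The order of the values in the word whose inversion set is [I]. *)
Definition tc_order I : rel 'I_n := fun v t => ((v < t) && ~~ I v t) || ((t < v) && I t v).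

Lemma tc_order_trans I : tc_rel I -> transitive (tc_order I).
Proof.
case=> _ h2 h3 v u t; rewrite /tc_order.
case: (ltngtP u v) => uv; case: (ltngtP v t) => vt; case: (ltngtP u t) => ut;
  rewrite /= ?andbF ?andbT ?orbF ?andbT //=; try lia.
1-8: move=> H1 H2.
- by apply: contra H1 => /(h3 _ _ _ uv vt); rewrite (negbTE H2) orbF.
- by apply: contra H1 => H3; apply: h2 H3 H2.
- by have := h3 _ _ _ ut uv H2; rewrite (negbTE H1) orbF.
- by have e := val_inj ut; subst; rewrite H2 in H1.
- by apply: contra H2 => H3; apply: h2 H1 H3.
- by have := h3 _ _ _ vt ut H1; rewrite (negbTE H2).
- by have e := val_inj ut; subst; rewrite H1 in H2.
- exact: h2 H2 H1.
Qed.

Lemma tc_relP I : tc_rel I -> exists s, inversion s =2 I.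
Proof.
move=> hI; have irr : irreflexive (tc_order I) by move=> v; rewrite /tc_order ltnn.
have tot a b : a != b -> tc_order I a b || tc_order I b a.
  move=> ne; rewrite /tc_order; case: (ltngtP a b) => /= ab.
  - by case: (I a b).
  - by case: (I b a); rewrite ?orbT.
  - by rewrite (val_inj ab) eqxx in ne.
have [s hs] := perm_of_order irr (tc_order_trans hI) tot.
exists s => a b; rewrite /inversion hs /tc_order.
case: hI => h1 _ _; case: (ltngtP a b) => ab /=; rewrite ?andbF //=;
  by apply/esym/negbTE/negP => /h1; lia.
Qed.

End Inversions.

Section UnionClosure.
Variable n : nat.
Variables A B : rel 'I_n.
Hypotheses (hA : tc_rel A) (hB : tc_rel B).
Implicit Types (a b c u v t : 'I_n).

Definition urel : rel 'I_n := fun u v => A u v || B u v.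
Definition uclos : rel 'I_n := fun u v => (u < v) && connect urel u v.

Lemma urel_lt u v : urel u v -> u < v.
Proof. by case: hA hB => [a1 _ _] [b1 _ _]; case/orP => [/a1|/b1]. Qed.

Lemma urel_path_le p u : path urel u p -> u <= last u p.
Proof. by elim: p u => //= v p IH u /andP[/urel_lt h /IH]; lia. Qed.

Lemma urel_path_lt p u : path urel u p -> p != [::] -> u < last u p.
Proof. by case: p => //= v p /andP[/urel_lt h /urel_path_le]; lia. Qed.

Lemma urel_uclos u v : urel u v -> uclos u v.
Proof. by move=> h; rewrite /uclos (urel_lt h) /=; apply: connect1. Qed.

Lemma uclos_trans u v t : uclos u v -> uclos v t -> uclos u t.
Proof.
case/andP=> h1 c1 /andP[h2 c2]; rewrite /uclos (ltn_trans h1 h2) /=.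
exact: connect_trans c1 c2.
Qed.

Lemma uclos_first_step u v : uclos u v ->
  urel u v || [exists c : 'I_n, [&& u < c, c < v, urel u c & uclos c v]].
Proof.
case/andP=> uv /connectP[[|c p] /=]; first by move=> _ e; rewrite e ltnn in uv.
case/andP=> e1 pth ->.
case: p pth => [|d p] pth /=; first by rewrite e1.
apply/orP; right; apply/existsP; exists c.
have /= h := urel_path_lt pth isT; rewrite (urel_lt e1) h e1 /= /uclos h /=.
by apply/connectP; exists (d :: p).
Qed.

Lemma uclos_min (W : rel 'I_n) : tc_rel W -> subrel A W -> subrel B W -> subrel uclos W.
Proof.
case=> _ w2 _ hAW hBW a b /andP[ab /connectP[p pth eb]]; subst b.
elim: p a pth ab => [|c p IH] a /=; first by move=> _ h; lia.
case/andP=> e1 pth _.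
have Wac : W a c by case/orP: e1 => [/hAW|/hBW].
case: p pth IH => [|d p] pth IH //=.
exact: (w2 _ _ _ Wac (IH _ pth (urel_path_lt pth isT))).
Qed.

Lemma tc_rel_uclos : tc_rel uclos.
Proof.
case: hA hB => [_ _ a3] [_ _ b3].
split; [by move=> u v /andP[] | exact: uclos_trans | ].
move=> a b c ab bc /andP[ac /connectP[p pth ec]]; subst c.
elim: p a pth ab bc ac => [|d p IH] a /=; first by move=> _ ab bc ac; lia.
case/andP=> e1 pth ab bc ac.
case: (ltngtP d b) => db.
- case: p pth IH bc ac => [|f p] pth IH bc ac /=; first by move: bc => /=; lia.
  have := IH d pth db bc (urel_path_lt pth isT); case/orP => [h|->]; last by rewrite orbT.
  by rewrite (uclos_trans (urel_uclos e1) h).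
- have [h|h] : urel a b \/ urel b d.
    case/orP: e1 => [/(a3 _ _ _ ab db)|/(b3 _ _ _ ab db)] /orP[] h;
      rewrite /urel h ?orbT; auto.
  + by rewrite (urel_uclos h).
  + apply/orP; right; rewrite /uclos bc /=.
    by apply: connect_trans (connect1 h) _; apply/connectP; exists p.
- by move: e1; rewrite (val_inj db) => /urel_uclos ->.
Qed.

Lemma uclos_split (W : rel 'I_n) : tc_rel W -> subrel A W -> subrel B W -> subrel W uclos ->
  forall a b, W a b = [|| A a b, B a b | [exists c : 'I_n, [&& a < c, c < b, W a c & W c b]]].
Proof.
move=> hW hAW hBW hWC a b; apply/idP/idP; last first.
  case: hW => _ tr _.
  by case/or3P => [/hAW|/hBW|/existsP[c /and4P[_ _ h1 h2]]] //; apply: tr h1 h2.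
move=> /hWC /uclos_first_step /orP[e|/existsP[c /and4P[ac cb e1 cl]]].
  by case/orP: e => ->; rewrite ?orbT.
apply/orP; right; apply/orP; right; apply/existsP; exists c.
rewrite ac cb /=; apply/andP; split; first by case/orP: e1 => [/hAW|/hBW].
exact: uclos_min hW hAW hBW _ _ cl.
Qed.
End UnionClosure.

Section JoinMeet.
Variable n : nat.
Implicit Types (x y z w u : 'S_n) (a b c : 'I_n).

Lemma join_inversion x z w : is_join x z w -> forall a b,
  inversion w a b = [|| inversion x a b, inversion z a b |
                     [exists c : 'I_n, [&& a < c, c < b, inversion w a c & inversion w c b]]].
Proof.
case=> /wleP xw /wleP zw hj.
have hx := tc_rel_inversion x; have hz := tc_rel_inversion z.
have [u Hu] := tc_relP (tc_rel_uclos hx hz).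
have xu : wle x u by apply/wleP => c d h; rewrite Hu; apply: urel_uclos; rewrite // /urel h.
have zu : wle z u by apply/wleP => c d h; rewrite Hu; apply: urel_uclos; rewrite // /urel h orbT.
apply: (uclos_split hx hz (tc_rel_inversion w) xw zw).
by move/wleP: (hj u xu zu) => wu c d /wu; rewrite Hu.
Qed.

Lemma meet_inversion x z w : is_meet x z w -> forall a b,
  compl (inversion w) a b = [|| compl (inversion x) a b, compl (inversion z) a b |
     [exists c : 'I_n, [&& a < c, c < b, compl (inversion w) a c & compl (inversion w) c b]]].
Proof.
case=> /wleP wx /wleP wz hm.
have hx := tc_rel_compl (tc_rel_inversion x); have hz := tc_rel_compl (tc_rel_inversion z).
have [u Hu] := tc_relP (tc_rel_compl (tc_rel_uclos hx hz)).
have ux : wle u x.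
  apply/wleP => c d; rewrite Hu /compl => /andP[cd nN]; apply/negPn/negP => nx.
  by move: nN; rewrite (urel_uclos hx hz) // /urel /compl cd nx.
have uz : wle u z.
  apply/wleP => c d; rewrite Hu /compl => /andP[cd nN]; apply/negPn/negP => nz.
  by move: nN; rewrite (urel_uclos hx hz) // /urel /compl cd nz orbT.
have /wleP uw := hm u ux uz.
have compl_le v : (forall c d, inversion w c d -> inversion v c d) ->
    subrel (compl (inversion v)) (compl (inversion w)).
  by move=> vw c d /andP[cd nv]; rewrite /compl cd /=; apply: contra nv; apply: vw.
apply: (uclos_split hx hz (tc_rel_compl (tc_rel_inversion w)) (compl_le _ wx) (compl_le _ wz)).
move=> c d /andP[cd nw]; apply/negPn/negP => nN.
have : inversion u c d by rewrite Hu /compl cd nN.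
by move/uw; rewrite (negbTE nw).
Qed.
End JoinMeet.

Section Kept.
Variable n : nat.
Implicit Types (s t x y z w : 'S_n) (a b c : 'I_n).

(* [free s a b]: no value of ]a,b[ sits between a and b in the word s; the
   values of ]a,b[ to the left of both are then [lvals s a b]. *)
Definition free s a b := [forall c : 'I_n, (a < c < b) ==> (inversion s a c == ~~ inversion s c b)].
Definition lvals s a b := [set c : 'I_n | (a < c < b) && inversion s a c].

(* [H a b L]: the fence f(a,b,L) is contracted; [D a b]: all the fences
   f(a,b,_) are.  [kept s a b]: the inversion (a,b) of s is seen by the
   congruence, i.e. it is not undone along a contracted fence. *)
Variable H : 'I_n -> 'I_n -> {set 'I_n} -> bool.
Variable D : 'I_n -> 'I_n -> bool.

Definition kept s a b := [&& inversion s a b, ~~ D a b & ~~ (free s a b && H a b (lvals s a b))].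
Definition kept_set s : {set 'I_n * 'I_n} := [set ab | kept s ab.1 ab.2].

Lemma kept_setP x y : kept_set x = kept_set y <-> kept x =2 kept y.
Proof.
split; first by move=> /setP e a b; have := e (a, b); rewrite !inE.
by move=> h; apply/setP => -[a b]; rewrite !inE h.
Qed.

Definition agree s t a b :=
  forall c, a < c < b -> inversion s a c = inversion t a c /\ inversion s c b = inversion t c b.

Lemma agree_free s t a b : agree s t a b -> free s a b = free t a b.
Proof.
move=> h; apply: eq_forallb => c; case hc: (a < c < b) => //=.
by have [-> ->] := h c hc.
Qed.

Lemma agree_lvals s t a b : agree s t a b -> lvals s a b = lvals t a b.
Proof.
move=> h; apply/setP => c; rewrite !inE; case hc: (a < c < b) => //=.
by have [-> _] := h c hc.
Qed.

Lemma agree_kept_eq s t a b : agree s t a b -> inversion s a b = inversion t a b ->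
  kept s a b = kept t a b.
Proof. by move=> ag e; rewrite /kept e (agree_free ag) (agree_lvals ag). Qed.

Lemma inversion_mid s a b c : a < c -> c < b ->
  inversion s a c = inversion s c b -> inversion s a b = inversion s a c.
Proof.
case: (tc_rel_inversion s) => _ tr cot ac cb e.
case hac: (inversion s a c); first by rewrite (tr _ _ _ hac) -?e.
by apply/negbTE; apply: contraFN hac => /(cot _ _ _ ac cb); rewrite -e orbb.
Qed.

Lemma agree_inversion_nonfree s t a b : agree s t a b -> ~~ free s a b ->
  inversion s a b = inversion t a b.
Proof.
move=> ag; rewrite negb_forall => /existsP[c]; rewrite negb_imply => /andP[hc].
case/andP: (hc) => ac cb hne.
have e : inversion s a c = inversion s c b.
  by move: hne; case: (inversion s a c); case: (inversion s c b).
have [e1 e2] := ag c hc.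
rewrite (inversion_mid ac cb e) (inversion_mid ac cb (_ : inversion t a c = _)) //.
by rewrite -e1 -e2.
Qed.

Lemma free_up x w a b : wle x w -> inversion x a b -> free w a b ->
  free x a b /\ lvals x a b = lvals w a b.
Proof.
move=> /wleP xw ixab fw.
case: (tc_rel_inversion x) => _ _ cotx.
have fx : free x a b.
  apply/forallP => c; apply/implyP => /andP[ac cb].
  have := forallP fw c; rewrite ac cb /= => /eqP fwc.
  case h1: (inversion x a c); case h2: (inversion x c b) => //=.
  - by move: fwc; rewrite (xw _ _ h1) (xw _ _ h2).
  - by have := cotx _ _ _ ac cb ixab; rewrite h1 h2.
split => //; apply/setP => c; rewrite !inE; case hc: (a < c < b) => //=.
case/andP: hc => ac cb.
have := forallP fw c; rewrite ac cb /= => /eqP fwc.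
have := forallP fx c; rewrite ac cb /= => /eqP fxc.
case h1: (inversion x a c); first by rewrite (xw _ _ h1).
by move: fxc; rewrite h1 => /esym/negbFE/xw; rewrite fwc => ->.
Qed.

Lemma free_down w y a b : wle w y -> a < b -> ~~ inversion y a b -> free w a b ->
  free y a b /\ lvals y a b = lvals w a b.
Proof.
move=> /wleP wy ab niy fw.
case: (tc_rel_inversion y) => _ try _.
have fy : free y a b.
  apply/forallP => c; apply/implyP => /andP[ac cb].
  have := forallP fw c; rewrite ac cb /= => /eqP fwc.
  case h1: (inversion y a c); case h2: (inversion y c b) => //=.
  - by rewrite (try _ _ _ h1 h2) in niy.
  - move: fwc; case e1: (inversion w a c); first by rewrite (wy _ _ e1) in h1.
    by case e2: (inversion w c b) => //; rewrite (wy _ _ e2) in h2.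
split => //; apply/setP => c; rewrite !inE; case hc: (a < c < b) => //=.
case/andP: hc => ac cb.
have := forallP fw c; rewrite ac cb /= => /eqP fwc.
have := forallP fy c; rewrite ac cb /= => /eqP fyc.
case e1: (inversion w a c); first by rewrite (wy _ _ e1).
by apply/negbTE; rewrite fyc negbK; move: fwc; rewrite e1 => /esym/negbFE/wy.
Qed.

Variable g : nat.
Hypothesis H_small : forall a b L, a < b -> b - a < g -> ~~ H a b L.
Hypothesis D_small : forall a b, a < b -> b - a < g -> ~~ D a b.
Hypothesis D_large : forall a b, a < b -> g < b - a -> D a b.

Lemma kept_small s a b : a < b -> b - a < g -> kept s a b = inversion s a b.
Proof. by move=> ab h; rewrite /kept (D_small ab h) (negbTE (H_small _ ab h)) andbF andbT. Qed.

Lemma kept_gap_le s a b : kept s a b -> b - a <= g.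
Proof.
case/and3P=> /andP[ab _] nD _; rewrite leqNgt.
by apply: contra nD => /(D_large ab).
Qed.

Lemma agree_kept x y a b : kept_set x = kept_set y -> a < b -> b - a <= g -> agree x y a b.
Proof.
move=> /kept_setP e ab hg c /andP[ac cb]; split.
- by rewrite -(kept_small x ac) ?e ?kept_small //; lia.
- by rewrite -(kept_small x cb) ?e ?kept_small //; lia.
Qed.

(* Inversions of a join or meet are computed from those of the arguments by
   recursion on [b - a]; this makes them agree strictly below the threshold. *)
Lemma agree_rec (P : 'S_n -> 'S_n -> 'S_n -> Prop) (F : bool -> bool -> bool -> bool)
  (G : bool -> bool -> bool)
  (rec : forall x z w, P x z w -> forall a b, a < b -> inversion w a b =
     F (inversion x a b) (inversion z a b)
       [exists c : 'I_n, [&& a < c, c < b & G (inversion w a c) (inversion w c b)]])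
  x y z w w' : kept_set x = kept_set y -> P x z w -> P y z w' ->
  forall a b, a < b -> b - a < g -> inversion w a b = inversion w' a b.
Proof.
move=> /kept_setP hxy hw hw' a b.
move: {2}(b - a) (leqnn (b - a)) => d; elim: d a b => [|d IH] a b hd ab hg; first lia.
rewrite (rec _ _ _ hw _ _ ab) (rec _ _ _ hw' _ _ ab) -!(kept_small _ ab hg) hxy.
congr (F _ _ _); apply: eq_existsb => c.
case ac: (a < c); case cb: (c < b) => //=.
by rewrite (IH a c) ?(IH c b) //; lia.
Qed.

Lemma join_inversion_rec x z w : is_join x z w -> forall a b, a < b -> inversion w a b =
  (fun p q r => [|| p, q | r]) (inversion x a b) (inversion z a b)
    [exists c : 'I_n, [&& a < c, c < b & (fun p q => p && q) (inversion w a c) (inversion w c b)]].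
Proof.
by move=> h a b _; rewrite (join_inversion h).
Qed.

Lemma meet_inversion_rec x z w : is_meet x z w -> forall a b, a < b -> inversion w a b =
  (fun p q r => ~~ [|| ~~ p, ~~ q | r]) (inversion x a b) (inversion z a b)
    [exists c : 'I_n, [&& a < c, c < b & (fun p q => ~~ p && ~~ q) (inversion w a c) (inversion w c b)]].
Proof.
move=> h a b ab; rewrite -[LHS]negbK; congr (~~ _).
have := meet_inversion h a b; rewrite /compl ab /= => ->.
congr [|| _, _ | _]; apply: eq_existsb => c.
by case ac: (a < c); case cb: (c < b) => //=; rewrite (ltn_trans ac cb).
Qed.

Lemma agree_join x y z w w' a b : kept_set x = kept_set y ->
  is_join x z w -> is_join y z w' -> a < b -> b - a <= g -> agree w w' a b.
Proof.
move=> hxy hw hw' ab hg c /andP[ac cb].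
by rewrite !(agree_rec join_inversion_rec hxy hw hw') //; lia.
Qed.

Lemma agree_meet x y z w w' a b : kept_set x = kept_set y ->
  is_meet x z w -> is_meet y z w' -> a < b -> b - a <= g -> agree w w' a b.
Proof.
move=> hxy hw hw' ab hg c /andP[ac cb].
by rewrite !(agree_rec meet_inversion_rec hxy hw hw') //; lia.
Qed.

Lemma kept_join x y z w w' a b : kept_set x = kept_set y ->
  is_join x z w -> is_join y z w' -> kept w a b -> kept w' a b.
Proof.
move=> hxy hj hj' kw; have hg := kept_gap_le kw.
case/and3P: kw => iw nD nh; have ab : a < b by case/andP: iw.
have ag := agree_join hxy hj hj' ab hg.
rewrite /kept nD -(agree_free ag) -(agree_lvals ag) nh /= andbT.
case fw: (free w a b); last by rewrite -(agree_inversion_nonfree ag) ?fw.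
move: nh; rewrite fw /= => nh.
case: (hj) => hxw _ _; case: (hj') => /wleP yw' /wleP zw' _.
move: iw; rewrite (join_inversion hj) => /or3P[ix|iz|/existsP[c /and4P[ac cb h1 h2]]].
- have [fx Lx] := free_up hxw ix fw.
  have : kept x a b by rewrite /kept ix nD fx Lx (negbTE nh).
  by move/kept_setP: hxy => -> /and3P[/yw'].
- exact: zw'.
- by have := forallP fw c; rewrite ac cb h1 h2.
Qed.

Lemma kept_meet x y z w w' a b : kept_set x = kept_set y ->
  is_meet x z w -> is_meet y z w' -> kept w a b -> kept w' a b.
Proof.
move=> hxy hm hm' kw; have hg := kept_gap_le kw.
case/and3P: kw => iw nD nh; have ab : a < b by case/andP: iw.
have ag := agree_meet hxy hm hm' ab hg.
rewrite /kept nD -(agree_free ag) -(agree_lvals ag) nh /= andbT.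
case fw: (free w a b); last by rewrite -(agree_inversion_nonfree ag) ?fw.
move: nh; rewrite fw /= => nh.
have fw' : free w' a b by rewrite -(agree_free ag).
case: (hm) => /wleP wx /wleP wz _; case: (hm') => hw'y _ _.
apply/negPn/negP => nw'.
have : compl (inversion w') a b by rewrite /compl ab nw'.
rewrite (meet_inversion hm') => /or3P[/andP[_ ny]|/andP[_ nz]|/existsP[c /and4P[ac cb h1 h2]]].
- have [fy Ly] := free_down hw'y ab ny fw'.
  have axy := agree_kept hxy ab hg.
  have : ~~ kept x a b by move/kept_setP: hxy => ->; rewrite /kept (negbTE ny).
  rewrite /kept (wx _ _ iw) nD /= negbK (agree_free axy) (agree_lvals axy) fy Ly.
  by rewrite -(agree_lvals ag) (negbTE nh).
- by rewrite (wz _ _ iw) in nz.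
- move: h1 h2; rewrite /compl ac cb /= => h1 h2.
  by have := forallP fw' c; rewrite ac cb (negbTE h1) (negbTE h2).
Qed.

Lemma kept_set_congruence :
  lattice_congruence (fun p q : 'S_n => kept_set p == kept_set q).
Proof.
split.
- by move=> p.
- by move=> p q; rewrite eq_sym.
- by move=> q p r /eqP -> /eqP ->.
- move=> x y z w w' /eqP hxy hw hw'; apply/eqP/kept_setP => a b.
  by apply/idP/idP; [apply: kept_join hw hw' | apply: kept_join hw' hw].
- move=> x y z w w' /eqP hxy hw hw'; apply/eqP/kept_setP => a b.
  by apply/idP/idP; [apply: kept_meet hw hw' | apply: kept_meet hw' hw].
Qed.

End Kept.

Section SwapWitness.
Variable n : nat.
Variables (a b : 'I_n) (L : {set 'I_n}).
Hypotheses (ab : a < b) (sL : L \subset [set c : 'I_n | a < c < b]).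

(* Sorting by [witness_key] gives the word  L a b R  (p below), and sorting by
   [swap12 \o witness_key] the word  L b a R  (q), where R lists the values
   outside L, a, b and each block is increasing. *)
Definition witness_key (v : 'I_n) : nat :=
  if v == a then 1 else if v == b then 2 else if v \in L then 0 else 3.
Definition swap12 (k : nat) : nat := if k == 1 then 2 else if k == 2 then 1 else k.

Lemma swap12_lt x y : x <= 3 -> y <= 3 -> ~~ ((x == 1) && (y == 2)) ->
  ~~ ((x == 2) && (y == 1)) -> (swap12 x < swap12 y) = (x < y).
Proof. by case: x => [|[|[|[|]]]] //; case: y => [|[|[|[|]]]]. Qed.

Lemma witness_key_le v : witness_key v <= 3.
Proof. by rewrite /witness_key; case: ifP => //; case: ifP => //; case: ifP. Qed.

Lemma witness_key_mid v : v != a -> v != b -> witness_key v = if v \in L then 0 else 3.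
Proof. by rewrite /witness_key => /negbTE -> /negbTE ->. Qed.

Lemma witness_key_a : witness_key a = 1.
Proof. by rewrite /witness_key eqxx. Qed.

Lemma a_neq_b : (a == b) = false.
Proof. by apply/negbTE/negP => /eqP e; move: ab; rewrite e ltnn. Qed.

Lemma witness_key_b : witness_key b = 2.
Proof. by rewrite /witness_key eq_sym a_neq_b eqxx. Qed.

Lemma witness_key1 v : (witness_key v == 1) = (v == a).
Proof. by rewrite /witness_key; case: (v =P a) => // _; case: (v =P b) => // _; case: (v \in L). Qed.

Lemma witness_key2 v : (witness_key v == 2) = (v == b).
Proof.
rewrite /witness_key; case: (v =P a) => [->|_]; first by rewrite a_neq_b.
by case: (v =P b) => // _; case: (v \in L).
Qed.

Lemma swap_witness : exists p q : 'S_n, [/\ ~~ inversion p a b, inversion q a b,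
  (forall u v : 'I_n, u < v -> (u, v) != (a, b) -> inversion p u v = inversion q u v),
  free q a b & lvals q a b = L].
Proof.
have [p hp] := perm_of_key witness_key.
have [q hq] := perm_of_key (swap12 \o witness_key).
have mid (c : 'I_n) : a < c < b -> c != a /\ c != b.
  by case/andP=> ac cb; split; apply/negP => /eqP e; move: ac cb; rewrite e ltnn.
have q_ac (c : 'I_n) : a < c < b -> inversion q a c = (c \in L).
  move=> /[dup] /mid[ca cb] /andP[ac _]; rewrite hq //= (witness_key_mid ca cb) witness_key_a.
  by case: (c \in L).
have q_cb (c : 'I_n) : a < c < b -> inversion q c b = (c \notin L).
  move=> /[dup] /mid[ca cb] /andP[_ cb']; rewrite hq //= (witness_key_mid ca cb) witness_key_b.
  by case: (c \in L).
exists p, q; split.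
- by rewrite hp // witness_key_a witness_key_b.
- by rewrite hq //= witness_key_a witness_key_b.
- move=> u v uv ne; rewrite hp // hq //= swap12_lt ?witness_key_le //.
  + by rewrite witness_key1 witness_key2; apply: contraL uv => /andP[/eqP-> /eqP->]; rewrite -leqNgt ltnW.
  + by rewrite witness_key1 witness_key2; apply: contra ne => /andP[/eqP-> /eqP->].
- by apply/forallP => c; apply/implyP => hc; rewrite q_ac // q_cb // negbK.
- apply/setP => c; rewrite inE; case hc: (a < c < b); first exact: q_ac.
  by apply/esym/negbTE; apply: contraFN hc => /(subsetP sL); rewrite inE.
Qed.
End SwapWitness.

Section FenceChain.
Variable n : nat.
Implicit Types (s p q x y : 'S_n) (a b c d : 'I_n) (L : {set 'I_n}).

Definition fence := ('I_n * 'I_n * {set 'I_n})%type.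
Implicit Types (f : fence).

Definition between a b : {set 'I_n} := [set c : 'I_n | a < c < b].
Definition wide_fences : {set fence} :=
  [set f : fence | (f.1.1.+1 < f.1.2) && (f.2 \subset between f.1.1 f.1.2)].
Definition gap f : nat := f.1.2 - f.1.1.

Definition fence_seq : seq fence := sort (fun f f' => gap f' <= gap f) (enum wide_fences).
Definition fence_rank f : nat := index f fence_seq.

Definition contracted k a b L : bool := ((a, b, L) \in wide_fences) && (fence_rank (a, b, L) < k).
Definition column_contracted k a b : bool :=
  [forall L : {set 'I_n}, (L \subset between a b) ==> contracted k a b L].
Definition kset k : 'S_n -> {set 'I_n * 'I_n} := kept_set (contracted k) (column_contracted k).
Definition Rk k : rel 'S_n := fun p q => kset k p == kset k q.

Lemma mem_fence_seq f : (f \in fence_seq) = (f \in wide_fences).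
Proof. by rewrite mem_sort mem_enum. Qed.

Lemma size_fence_seq : size fence_seq = #|wide_fences|.
Proof. by rewrite size_sort cardE. Qed.

Lemma wide_fence_gap f : f \in wide_fences -> 2 <= gap f.
Proof. by rewrite inE /gap => /andP[h _]; lia. Qed.

Lemma wide_fenceI a b L : a.+1 < b -> L \subset between a b -> (a, b, L) \in wide_fences.
Proof. by move=> ab sL; rewrite inE /= ab sL. Qed.

Lemma fence_rank_gap f f' : f \in wide_fences -> f' \in wide_fences ->
  gap f < gap f' -> fence_rank f' < fence_rank f.
Proof.
rewrite -!mem_fence_seq => hf hf' hg; rewrite /fence_rank ltnNge leq_eqVlt negb_or.
apply/andP; split.
  by apply: contraL hg => /eqP e; rewrite -(nth_index f hf) e nth_index // ltnn.
have tr : transitive (fun f f' : fence => gap f' <= gap f).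
  by move=> ? ? ? h1 h2; apply: leq_trans h2 h1.
have sorted_seq : sorted (fun f f' : fence => gap f' <= gap f) fence_seq.
  by apply: sort_sorted => ? ?; apply: leq_total.
by apply/negP => /(sorted_ltn_index tr sorted_seq _ _ hf hf'); rewrite leqNgt hg.
Qed.

Lemma fence_of_rank k : k < #|wide_fences| ->
  exists2 f, f \in wide_fences & fence_rank f = k.
Proof.
rewrite -size_fence_seq => hk.
case E: fence_seq hk => [//|f0 r] hk; rewrite -E in hk.
exists (nth f0 fence_seq k); first by rewrite -mem_fence_seq mem_nth.
by rewrite /fence_rank index_uniq // sort_uniq enum_uniq.
Qed.

Lemma contracted_mono k a b L : contracted k a b L -> contracted k.+1 a b L.
Proof. by case/andP=> h1 h2; rewrite /contracted h1 ltnS ltnW. Qed.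

Lemma column_contracted_mono k a b : column_contracted k a b -> column_contracted k.+1 a b.
Proof.
move=> /forallP h; apply/forallP => L; apply/implyP => sL.
by apply: contracted_mono; have := h L; rewrite sL.
Qed.

Lemma column_contracted_set0 k a b : column_contracted k a b -> contracted k a b set0.
Proof. by move=> /forallP /(_ set0); rewrite sub0set. Qed.

Lemma column_contracted_above k f c d : f \in wide_fences -> fence_rank f = k ->
  gap f < d - c -> column_contracted k c d.
Proof.
move=> wf rf hg; apply/forallP => L; apply/implyP => sL.
have wL : (c, d, L) \in wide_fences.
  by apply: wide_fenceI sL; have := wide_fence_gap wf; lia.
by rewrite /contracted wL -rf (fence_rank_gap wf wL).
Qed.

Lemma contracted_threshold k : exists g,
  [/\ forall a b L, a < b -> b - a < g -> ~~ contracted k a b L,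
      forall a b, a < b -> b - a < g -> ~~ column_contracted k a b &
      forall a b, a < b -> g < b - a -> column_contracted k a b].
Proof.
suff [g [hH hD]] : exists g, (forall a b L, a < b -> b - a < g -> ~~ contracted k a b L) /\
    (forall a b, a < b -> g < b - a -> column_contracted k a b).
  exists g; split => // a b ab hg.
  exact: contra (@column_contracted_set0 k a b) (hH a b set0 ab hg).
case: (ltnP k #|wide_fences|) => [/fence_of_rank [f wf rf] | hk].
- exists (gap f); split; last by move=> a b _; apply: column_contracted_above.
  move=> a b L ab hg; apply/negP => /andP[wL].
  by rewrite -rf ltnNge (ltnW (fence_rank_gap wL wf hg)).
- exists 1; split => [a b L|a b ab hg]; first lia.
  apply/forallP => L; apply/implyP => sL.
  have wL : (a, b, L) \in wide_fences by apply: wide_fenceI => //; lia.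
  rewrite /contracted wL (leq_trans _ hk) // -size_fence_seq index_mem mem_fence_seq //.
Qed.

Lemma Rk_congruence k : lattice_congruence (Rk k).
Proof.
have [g [hH hD1 hD2]] := contracted_threshold k.
exact: kept_set_congruence hH hD1 hD2.
Qed.

Lemma fence_edge_inversion a b L p q : fence_edge a b L p q ->
  inversion p a b = ~~ inversion q a b.
Proof.
case=> ab [i [j [ij qi [qj _] hpq _]]].
have posK (s : 'S_n) t : pos s (s t) = t by rewrite /pos permK.
suff [x [y [xy pa pb qa qb]]] : exists x y : 'I_n,
    [/\ x != y :> nat, pos p a = x, pos p b = y, pos q a = y & pos q b = x].
  by rewrite /inversion ab pa pb qa qb /=; case: ltngtP xy.
case/orP: hpq => /andP[/eqP pi /eqP pj].
- exists i, j; split; first by rewrite -ij neq_ltn ltnSn.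
  + by rewrite -pi posK.
  + by rewrite -pj posK.
  + by rewrite -pi -qj posK.
  + by rewrite -pj -qi posK.
- exists j, i; split; first by rewrite -ij neq_ltn ltnSn orbT.
  + by rewrite -pj posK.
  + by rewrite -pi posK.
  + by rewrite -pj -qi posK.
  + by rewrite -pi -qj posK.
Qed.

Lemma Rk_essential k : essential (Rk k).
Proof.
move=> a b e [p [q [edge /eqP /kept_setP /(_ a b)]]].
have nc L : contracted k a b L = false by rewrite /contracted inE /= e ltnn.
have ncol : column_contracted k a b = false.
  by apply/negbTE; apply: contraFN (nc set0); apply: column_contracted_set0.
by rewrite /kept ncol !nc !andbF !andbT (fence_edge_inversion edge); case: inversion.
Qed.

Lemma kset_mono k p q : kset k p = kset k q -> kset k.+1 p = kset k.+1 q.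
Proof.
move=> hpq; have [g [hH hD1 hD2]] := contracted_threshold k.
apply/kept_setP => a b.
case ab: (a < b); last by rewrite /kept /inversion ab.
case hD: (column_contracted k.+1 a b); first by rewrite /kept hD !andbF.
have nD : ~~ column_contracted k a b.
  by apply: contraFN hD; apply: column_contracted_mono.
have hg : b - a <= g by rewrite leqNgt; apply: contra nD; apply: hD2.
have ag := agree_kept hH hD1 hpq ab hg.
have down s : kept (contracted k.+1) (column_contracted k.+1) s a b ->
    kept (contracted k) (column_contracted k) s a b.
  case/and3P=> i1 _ i3; rewrite /kept i1 nD /=; apply: contra i3.
  by case/andP=> -> /contracted_mono.
move/kept_setP: hpq => /(_ a b) e.
case kp: (kept (contracted k) (column_contracted k) p a b).
- apply: agree_kept_eq ag _.
  by move: (kp); rewrite e => /and3P[-> _ _]; case/and3P: kp => ->.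
- by apply/idP/idP => /down; rewrite -?e kp.
Qed.

Lemma kset_strict k : k < #|wide_fences| ->
  exists p q, kset k.+1 p = kset k.+1 q /\ kset k p != kset k q.
Proof.
move=> /fence_of_rank [[[a b] L] wf rf].
have /andP[ab1 sL] : (a.+1 < b) && (L \subset between a b) by move: wf; rewrite inE.
have ab : a < b by lia.
have [p [q [npab qab pq fq lq]]] := swap_witness ab sL.
exists p, q; split.
- apply/kept_setP => c d.
  case cd: (c < d); last by rewrite /kept /inversion cd.
  case: (eqVneq (c, d) (a, b)) => [[-> ->]|ne].
    by rewrite /kept (negbTE npab) qab fq lq /contracted wf rf ltnSn !andbF.
  case: (ltnP (b - a) (d - c)) => hg.
    by rewrite /kept (column_contracted_mono (column_contracted_above wf rf hg)) !andbF.
  apply: agree_kept_eq; last exact: pq.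
  move=> e /andP[ce ed]; rewrite !pq ?(ltn_trans ce ed) //;
    by rewrite xpair_eqE; apply/negP => /andP[/eqP ca /eqP eb]; move: hg; subst; lia.
- apply/negP => /eqP /kept_setP /(_ a b).
  have ncol : ~~ column_contracted k a b.
    by apply/negP => /forallP /(_ L); rewrite sL /contracted wf rf ltnn.
  by rewrite /kept (negbTE npab) qab ncol fq lq /contracted wf rf ltnn.
Qed.

End FenceChain.

Section Counting.
Variable n : nat.
Implicit Types (X : {set 'I_n}) (a b c : 'I_n).

Definition fence_support (f : fence n) : {set 'I_n} := f.1.1 |: (f.1.2 |: f.2).

(* The empty set, the singletons and the pairs {x, x+1}; the empty set is
   [small_set (inr (n-1))]. *)
Definition small_set (u : 'I_n + 'I_n) : {set 'I_n} :=
  match u with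
  | inl x => [set x]
  | inr x => [set y : 'I_n | (x.+1 < n) && ((y == x) || (y == x.+1 :> nat))]
  end.
Definition small_sets : {set {set 'I_n}} := [set small_set u | u in [set: 'I_n + 'I_n]].

Lemma card_small_sets : #|small_sets| <= 2 * n.
Proof. by apply: leq_trans (leq_imset_card _ _) _; rewrite cardsT card_sum card_ord; lia. Qed.

Lemma fence_support_minmax X a b : a \in X -> b \in X ->
  (forall c, c \in X -> a <= c <= b) -> a.+1 < b -> X \in fence_support @: wide_fences n.
Proof.
move=> aX bX inX ab; apply/imsetP; exists (a, b, X :\ a :\ b).
  apply: wide_fenceI => //; apply/subsetP => c; rewrite !inE => /and3P[cb ca cX].
  by have := inX c cX; rewrite -!(inj_eq val_inj) /= in ca cb; lia.
apply/setP => c; rewrite /fence_support /= !inE.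
by case: (eqVneq c a) => [->//|_]; case: (eqVneq c b) => [->//|_].
Qed.

Lemma small_or_fence_support X : 0 < n ->
  X \in small_sets \/ X \in fence_support @: wide_fences n.
Proof.
move=> n0; have small u : small_set u \in small_sets by apply: imset_f; rewrite inE.
case: (set_0Vmem X) => [->|[x xX]].
  left; have lt : n.-1 < n by rewrite ltn_predL.
  suff -> : set0 = small_set (inr (Ordinal lt)) by [].
  by apply/setP => y; rewrite !inE /= prednK // ltnn.
case: (arg_minnP (fun i : 'I_n => nat_of_ord i) xX) => a aX amin.
case: (arg_maxnP (fun i : 'I_n => nat_of_ord i) xX) => b bX bmax.
have inX c : c \in X -> a <= c <= b by move=> cX; apply/andP; split; [apply: amin | apply: bmax].
case: (ltngtP a.+1 b) => [ab|ba|ab]; first by right; apply: fence_support_minmax aX bX inX ab.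
- left; suff -> : X = small_set (inl a) by [].
  apply/setP => c; rewrite inE; apply/idP/eqP => [cX|->//].
  by apply: ord_inj; have /andP[h1 h2] := inX c cX; lia.
- left; suff -> : X = small_set (inr a) by [].
  apply/setP => c; rewrite inE ab ltn_ord /=; apply/idP/idP => [cX|/orP[/eqP->//|/eqP e]].
    by have := inX c cX; rewrite -ab => /andP[h1 h2]; rewrite -!(inj_eq val_inj) /=; lia.
  by rewrite (_ : c = b) //; apply: ord_inj.
Qed.

Lemma card_wide_fences : 0 < n -> 2 ^ n - 2 * n <= #|wide_fences n|.
Proof.
move=> n0.
have cC : #|~: small_sets| <= #|wide_fences n|.
  apply: leq_trans (leq_imset_card fence_support _); apply: subset_leq_card.
  by apply/subsetP => X; rewrite inE; case: (small_or_fence_support X n0) => [->|].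
have := cardsC small_sets; rewrite -cardsT -powersetT card_powerset cardsT card_ord.
by have := card_small_sets; lia.
Qed.

Lemma card_qverts_kernel_lt (T : eqType) (phi1 phi2 : 'S_n -> T) :
  (forall p q, phi1 p = phi1 q -> phi2 p = phi2 q) ->
  (exists p q, phi2 p = phi2 q /\ phi1 p != phi1 q) ->
  #|qverts (fun p q => phi2 p == phi2 q)| < #|qverts (fun p q => phi1 p == phi1 q)|.
Proof.
move=> coarser [p0 [q0 [e2 ne1]]].
set R1 := (fun p q : 'S_n => phi1 p == phi1 q).
set R2 := (fun p q : 'S_n => phi2 p == phi2 q).
pose G (X : {set 'S_n}) := \bigcup_(x in X) cls R2 x.
have G_cls p : G (cls R1 p) = cls R2 p.
  apply/setP => t; apply/bigcupP/idP.
  - by case=> x; rewrite !inE /R1 /R2 => /eqP/coarser ->.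
  - by move=> h; exists p; rewrite // !inE /R1.
have -> : qverts R2 = G @: qverts R1.
  by rewrite /qverts -imset_comp; apply: eq_imset => p /=; rewrite G_cls.
rewrite ltn_neqAle leq_imset_card andbT; apply/negP => /imset_injP inj.
have /inj : cls R1 p0 \in qverts R1 by apply: imset_f; rewrite inE.
move=> /(_ (cls R1 q0)); rewrite !G_cls.
have -> : cls R2 p0 = cls R2 q0 by apply/setP => t; rewrite !inE /R2 e2.
move=> /(_ (imset_f _ (in_setT q0)) erefl) /setP /(_ q0).
by rewrite !inE /R1 eqxx (negbTE ne1).
Qed.

Lemma Q_iso_card (R S : rel 'S_n) : Q_iso R S -> #|qverts R| = #|qverts S|.
Proof. by case=> f [inj img _]; rewrite -img (card_in_imset inj). Qed.

Lemma card_qverts_Rk_decreasing i j : i < j -> j <= #|wide_fences n| ->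
  #|qverts (@Rk n j)| < #|qverts (@Rk n i)|.
Proof.
elim: j => // j IH ij hj.
have step : #|qverts (@Rk n j.+1)| < #|qverts (@Rk n j)|.
  by apply: card_qverts_kernel_lt; [exact: kset_mono | exact: kset_strict].
case: (ltngtP i j) => [lt|//|->//]; last lia.
exact: ltn_trans step (IH lt (ltnW hj)).
Qed.

End Counting.

Theorem mainTheorem9 (n : nat) (hn : 3 <= n) :
  exists (k : nat) (Rs : nat -> rel 'S_n),
    [/\ 2 ^ n - 2 * n + 1 <= k,
        (forall i, i < k -> lattice_congruence (Rs i) /\ essential (Rs i)) &
        (forall i j, i < k -> j < k -> i != j -> ~ Q_iso (Rs i) (Rs j))].
Proof.
exists #|wide_fences n|.+1, (@Rk n); split.
- have n0 : 0 < n by apply: leq_trans hn.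
  by have := card_wide_fences n0; lia.
- by move=> i _; split; [exact: Rk_congruence | exact: Rk_essential].
- move=> i j hi hj ij /Q_iso_card.
  case: (ltngtP i j) => [lt|lt|e]; last by rewrite e eqxx in ij.
  + by move=> e; have := card_qverts_Rk_decreasing lt hj; rewrite e ltnn.
  + by move=> e; have := card_qverts_Rk_decreasing lt hi; rewrite e ltnn.
Qed.
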